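(* Let $A, B\in\mathbb{R}^{m\times n}$ with $m<n$, $b\in\mathbb{R}^m$, and $s\in\{-1,1\}^n$, and let $B = M_B - N_B$ with $M_B,N_B\in\mathbb{R}^{m\times n}$ and $\operatorname{rank}(M_B) = m$. (a) Let $1\le p\le\infty$. If $M_B^\dagger b \le 0$, $M_B^\dagger [N_B+A\operatorname{diag}(s)] \ge 0$ and $\|M_B^\dagger [N_B+A\operatorname{diag}(s)]\|_p < 1$, then there exists a nonnegative solution $y_*\in\mathbb{R}^n$ of the linear system $[A\operatorname{diag}(s)-B]y=b$ such that $x_* = \operatorname{diag}(s)y_*$ is a solution of $Ax-B|x|=b$. (b) If $M_B^\dagger b < 0$ and $\|M_B^\dagger [N_B+A\operatorname{diag}(s)]\|_\infty < \gamma/2$, where $\gamma = \dfrac{\min_i|(M_B^\dagger b)_i|}{\max_i|(M_B^\dagger b)_i|}$, then $Ax-B|x|=b$ has infinitely many solutions with the sign pattern $s$.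
   Context: $M^\dagger$ is the Moore–Penrose inverse; $|x|$ is the entrywise absolute value; $\operatorname{diag}(s)$ is the diagonal matrix with diagonal $s$. Vector/matrix inequalities ($\le,<,\ge$) are entrywise. $\|\cdot\|_p$ on matrices is the operator norm induced by the vector $p$-norm. A vector $x$ has sign pattern $s$ if $\operatorname{sign}(x_{(i)})=s_{(i)}$ for all $i$. *)

From HB Require Import structures.
From mathcomp Require Import all_boot all_order all_algebra.
From mathcomp Require Import all_classical all_reals all_analysis.
Set Implicit Arguments. Unset Strict Implicit. Unset Printing Implicit Defensive.
Import Order.TTheory GRing.Theory Num.Theory.
Local Open Scope classical_set_scope.
Local Open Scope ring_scope.

(* Moore--Penrose inverse, via the four Penrose equations (real matrices,
   so the conjugate transpose is the transpose). *)
Definition is_MP_inverse (R : realType) (m n : nat)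
    (M : 'M[R]_(m, n)) (X : 'M[R]_(n, m)) : Prop :=
  [/\ M *m X *m M = M, X *m M *m X = X,
      (M *m X)^T = M *m X & (X *m M)^T = X *m M].

Definition mx_le (R : realType) (m n : nat) (P Q : 'M[R]_(m, n)) : Prop :=
  forall i j, P i j <= Q i j.
Definition mx_lt (R : realType) (m n : nat) (P Q : 'M[R]_(m, n)) : Prop :=
  forall i j, P i j < Q i j.

Definition absmx (R : realType) (m n : nat) (P : 'M[R]_(m, n)) : 'M[R]_(m, n) :=
  map_mx (fun a => `|a|) P.

Definition diagc (R : realType) (n : nat) (s : 'cV[R]_n) : 'M[R]_n :=
  diag_mx s^T.

Definition vnorm (R : realType) (p : \bar R) (n : nat) (x : 'cV[R]_n) : R :=
  match p with
  | EFin r => powR (\sum_i powR `|x i 0| r) r^-1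
  | +oo%E => \big[Num.max/0]_i `|x i 0|
  | -oo%E => 0
  end.

Definition opnorm (R : realType) (p : \bar R) (m n : nat) (M : 'M[R]_(m, n)) : R :=
  sup [set vnorm p (M *m x) / vnorm p x | x in [set x : 'cV[R]_n | x != 0]].

Definition vabsmax (R : realType) (n : nat) (v : 'cV[R]_n) : R :=
  \big[Num.max/0]_i `|v i 0|.
Definition vabsmin (R : realType) (n : nat) (v : 'cV[R]_n) : R :=
  \big[Num.min/vabsmax v]_i `|v i 0|.

Definition has_sign_pattern (R : realType) (n : nat) (x s : 'cV[R]_n) : Prop :=
  forall i, Num.sg (x i 0) = s i 0.

(* Put C := M_B^+ (N_B + A diag(s)) and c := M_B^+ b.  Since M_B M_B^+ = I, every
   fixed point y = C y - c + w with M_B w = 0 solves [A diag(s) - B] y = b, and if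
   y >= 0 then x = diag(s) y solves A x - B|x| = b because |x| = y.  A contraction
   C makes I - C invertible, so such fixed points exist.
   (a) With w = 0, C >= 0 and c <= 0, the negative part z of y satisfies
   0 <= z <= C z, and a contraction forces z = 0.
   (b) Writing q = ||C||_oo, one gets ||y||_oo <= (max|c_i| + |w|)/(1 - q) and
   y_i >= min|c_i| - |w| - q ||y||_oo, which is positive for every small enough w;
   as m < n the kernel of M_B is nontrivial, and distinct w give distinct x. *)

From HB Require Import structures.
From mathcomp Require Import all_boot all_order all_algebra.
From mathcomp Require Import all_classical all_reals all_analysis.
From mathcomp Require Import lra.
Import Order.TTheory GRing.Theory Num.Theory.
Local Open Scope classical_set_scope.
Local Open Scope ring_scope.

Set Implicit Arguments. Unset Strict Implicit. Unset Printing Implicit Defensive.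

Section VectorNorm.
Variable R : realType.
Implicit Types (p : \bar R) (n : nat).

Lemma powRK (r a : R) : r != 0 -> 0 <= a -> (a `^ r) `^ r^-1 = a.
Proof. by move=> r_neq0 a_ge0; rewrite -powRrM mulfV // powRr1. Qed.

Lemma ler_powR_base (r a b : R) : 0 <= r -> 0 <= a -> a <= b -> a `^ r <= b `^ r.
Proof. by move=> r_ge0 a_ge0 ab; apply: ge0_ler_powR; rewrite // nnegrE (le_trans a_ge0). Qed.

Lemma vnorm_ge0 p n (x : 'cV[R]_n) : (1 <= p)%E -> 0 <= vnorm p x.
Proof. by case: p => [r| |] //= _; [exact: powR_ge0 | exact: bigmax_ge_id]. Qed.

Lemma normr_le_vnorm p n (x : 'cV[R]_n) i : (1 <= p)%E -> `|x i 0| <= vnorm p x.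
Proof.
case: p => [r| |] //=; last by move=> _; exact: le_bigmax.
rewrite lee_fin => r_ge1; have r_gt0 : 0 < r by apply: lt_le_trans r_ge1.
rewrite -[leLHS](powRK (lt0r_neq0 r_gt0) (normr_ge0 _)).
apply: ler_powR_base; rewrite ?invr_ge0 ?(ltW r_gt0) ?powR_ge0 //.
by rewrite (bigD1 i) //= lerDl sumr_ge0 // => j _; rewrite powR_ge0.
Qed.

Lemma vnorm_gt0 p n (x : 'cV[R]_n) : (1 <= p)%E -> x != 0 -> 0 < vnorm p x.
Proof.
move=> p_ge1 x_neq0; have [i xi_neq0] : exists i, x i 0 != 0.
  apply/existsP; apply: contraNT x_neq0 => /existsPn x0.
  by apply/eqP/matrixP => i j; rewrite ord1 mxE; apply/eqP/negPn.
by apply: lt_le_trans (normr_le_vnorm x i p_ge1); rewrite normr_gt0.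
Qed.

(* The constant n.+1 is crude: it only serves to show that the ratios defining
   opnorm are bounded. *)
Lemma vnorm_le_bound p n (x : 'cV[R]_n) (a : R) : (1 <= p)%E -> 0 <= a ->
  (forall i, `|x i 0| <= a) -> vnorm p x <= n.+1%:R * a.
Proof.
move=> p_ge1 a_ge0 x_le; have a_le : a <= n.+1%:R * a by rewrite ler_peMl // ler1n.
case: p p_ge1 => [r| |] //=; last first.
  by move=> _; apply: bigmax_le; rewrite ?mulr_ge0 // => i _; apply: le_trans a_le.
rewrite lee_fin => r_ge1; have r_gt0 : 0 < r by apply: lt_le_trans r_ge1.
rewrite -[leRHS](powRK (lt0r_neq0 r_gt0)) ?mulr_ge0 //.
apply: ler_powR_base; rewrite ?invr_ge0 ?(ltW r_gt0) ?sumr_ge0 //.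
apply: (@le_trans _ _ (\sum_(i < n) a `^ r)).
  by apply: ler_sum => i _; apply: ler_powR_base; rewrite ?(ltW r_gt0).
rewrite sumr_const card_ord -[_ *+ n]mulr_natl powRM // ler_wpM2r ?powR_ge0 //.
by apply: le_trans (le1r_powR _ r_ge1); rewrite ?ler_nat ?ler1n.
Qed.

Lemma vnorm0 p n : (1 <= p)%E -> vnorm p (0 : 'cV[R]_n) = 0.
Proof.
move=> p_ge1; apply/le_anti; rewrite vnorm_ge0 // andbT.
by rewrite -(mulr0 n.+1%:R) vnorm_le_bound // => i; rewrite mxE normr0.
Qed.

Lemma vnorm_le p n (x y : 'cV[R]_n) : (1 <= p)%E ->
  (forall i, `|x i 0| <= `|y i 0|) -> vnorm p x <= vnorm p y.
Proof.
move=> + xy; case: p => [r r_ge1|_|//] /=.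
  have r_gt0 : 0 < r by apply: lt_le_trans ltr01 _; rewrite -lee_fin.
  apply: ler_powR_base; rewrite ?invr_ge0 ?(ltW r_gt0) ?sumr_ge0 //.
  by apply: ler_sum => i _; apply: ler_powR_base; rewrite ?(ltW r_gt0).
apply: bigmax_le => [|i _]; first exact: bigmax_ge_id.
exact: le_trans (xy i) (le_bigmax _ _ _).
Qed.

Lemma vabsmin_le n (v : 'cV[R]_n) i : vabsmin v <= `|v i 0|.
Proof. exact: bigmin_le. Qed.

Lemma vabsmax_ge n (v : 'cV[R]_n) i : `|v i 0| <= vabsmax v.
Proof. exact: le_bigmax. Qed.

End VectorNorm.

Section LinearAlgebra.
Variable R : realType.
Implicit Types (m n : nat).

Lemma MP_inverse_rinv m n (M : 'M[R]_(m, n)) (X : 'M[R]_(n, m)) :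
  \rank M = m -> is_MP_inverse M X -> M *m X = 1%:M.
Proof.
move=> rankM [MXM _ _ _]; have M_free : row_free M by rewrite /row_free rankM.
by apply: (row_free_inj M_free); rewrite /= mul1mx.
Qed.

Lemma cV_kernelP m n (M : 'M[R]_(m, n)) :
  reflect (exists2 v : 'cV[R]_n, v != 0 & M *m v = 0) (kermx M^T != 0).
Proof.
apply: (iffP rowV0Pn) => [[u /sub_kermxP uM u_neq0]|[v v_neq0 Mv]].
  exists u^T; first by rewrite trmx_eq0.
  by rewrite -[M]trmxK -trmx_mul uM trmx0.
exists v^T; last by rewrite -trmx_eq0 trmxK.
by apply/sub_kermxP; rewrite -trmx_mul Mv trmx0.
Qed.

Lemma kernel_nontrivial m n (M : 'M[R]_(m, n)) : (m < n)%N ->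
  exists2 v : 'cV[R]_n, v != 0 & M *m v = 0.
Proof.
move=> m_lt_n; apply/cV_kernelP; rewrite -mxrank_eq0 mxrank_ker mxrank_tr subn_eq0.
by rewrite -ltnNge (leq_ltn_trans (rank_leq_row M)).
Qed.

Lemma unitmx_1B n (C : 'M[R]_n) :
  (forall x : 'cV[R]_n, C *m x = x -> x = 0) -> 1%:M - C \in unitmx.
Proof.
move=> C_fix0; rewrite -unitmx_tr -row_free_unit -kermx_eq0.
apply: contraT => /cV_kernelP[x x_neq0]; rewrite mulmxBl mul1mx => /eqP.
by rewrite subr_eq0 => /eqP/esym/C_fix0 x0; rewrite x0 eqxx in x_neq0.
Qed.

Lemma invmx_1B_fixpoint n (C : 'M[R]_n) (d : 'cV[R]_n) : 1%:M - C \in unitmx ->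
  let y := invmx (1%:M - C) *m d in y = C *m y + d.
Proof.
move=> C_unit y; apply/eqP; rewrite addrC -subr_eq -{1}[y]mul1mx -mulmxBl.
by rewrite /y mulmxA mulmxV // mul1mx.
Qed.

End LinearAlgebra.

Section OperatorNorm.
Variable R : realType.
Implicit Types (p : \bar R) (m n : nat).

Lemma normr_mulmx_le p m n (C : 'M[R]_(m, n)) (x : 'cV[R]_n) i : (1 <= p)%E ->
  `|(C *m x) i 0| <= (\sum_j `|C i j|) * vnorm p x.
Proof.
move=> p_ge1; rewrite mxE mulr_suml (le_trans (ler_norm_sum _ _ _)) //.
by apply: ler_sum => j _; rewrite normrM ler_wpM2l ?normr_le_vnorm.
Qed.

Lemma vnorm_mulmx_bounded p m n (C : 'M[R]_(m, n)) : (1 <= p)%E ->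
  exists K, forall x, vnorm p (C *m x) <= K * vnorm p x.
Proof.
move=> p_ge1; pose S := \sum_i \sum_j `|C i j|.
have row_le_S i : \sum_j `|C i j| <= S.
  by rewrite /S (bigD1 i) //= lerDl sumr_ge0 // => k _; rewrite sumr_ge0.
have S_ge0 : 0 <= S by rewrite sumr_ge0 // => i _; rewrite sumr_ge0.
exists (m.+1%:R * S) => x; rewrite -mulrA vnorm_le_bound ?mulr_ge0 ?vnorm_ge0 // => i.
by rewrite (le_trans (normr_mulmx_le _ _ i p_ge1)) // ler_wpM2r ?vnorm_ge0.
Qed.

Lemma vnorm_ratio_le_opnorm p m n (C : 'M[R]_(m, n)) (x : 'cV[R]_n) :
  (1 <= p)%E -> x != 0 -> vnorm p (C *m x) / vnorm p x <= opnorm p C.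
Proof.
move=> p_ge1 x_neq0; apply: ub_le_sup; last by exists x.
have [K CK] := vnorm_mulmx_bounded C p_ge1.
by exists K => _ [y /= y_neq0 <-]; rewrite ler_pdivrMr ?vnorm_gt0.
Qed.

Lemma vnorm_mulmx_le p m n (C : 'M[R]_(m, n)) (x : 'cV[R]_n) : (1 <= p)%E ->
  vnorm p (C *m x) <= opnorm p C * vnorm p x.
Proof.
move=> p_ge1; have [->|x_neq0] := eqVneq x 0; first by rewrite mulmx0 !vnorm0 ?mulr0.
by rewrite -ler_pdivrMr ?vnorm_gt0 ?vnorm_ratio_le_opnorm.
Qed.

Lemma opnorm_ge0 p m n (C : 'M[R]_(m, n)) : (1 <= p)%E -> 0 <= opnorm p C.
Proof.
move=> p_ge1; have [[x x_neq0]|no_x] := pselect (exists x : 'cV[R]_n, x != 0).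
  by rewrite (le_trans _ (vnorm_ratio_le_opnorm C p_ge1 x_neq0)) ?divr_ge0 ?vnorm_ge0.
rewrite /opnorm (_ : [set _ | x in _] = set0) ?sup0 //.
by apply/seteqP; split => // _ [x /= x_neq0 _]; apply: no_x; exists x.
Qed.

Lemma opnorm_lt1_vnorm_eq0 p n (C : 'M[R]_n) (x : 'cV[R]_n) : (1 <= p)%E ->
  opnorm p C < 1 -> vnorm p x <= vnorm p (C *m x) -> x = 0.
Proof.
move=> p_ge1 C_lt1 x_le_Cx; apply/eqP; apply: contraTT C_lt1 => x_neq0.
have := le_trans x_le_Cx (vnorm_mulmx_le C x p_ge1).
by rewrite -ler_pdivrMr ?vnorm_gt0 // divff ?lt0r_neq0 ?vnorm_gt0 // -leNgt.
Qed.

Lemma opnorm_lt1_unitmx_1B p n (C : 'M[R]_n) : (1 <= p)%E ->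
  opnorm p C < 1 -> 1%:M - C \in unitmx.
Proof.
move=> p_ge1 C_lt1; apply: unitmx_1B => x Cx.
by apply: (opnorm_lt1_vnorm_eq0 p_ge1 C_lt1); rewrite Cx.
Qed.

End OperatorNorm.

Section FixpointSign.
Variable R : realType.
Implicit Types (p : \bar R) (n : nat).

Lemma fixpoint_ge0 p n (C : 'M[R]_n) (d y : 'cV[R]_n) : (1 <= p)%E ->
  opnorm p C < 1 -> mx_le 0 C -> mx_le 0 d -> y = C *m y + d -> mx_le 0 y.
Proof.
move=> p_ge1 C_lt1 C_ge0 d_ge0 y_fix.
pose z := \col_i Num.max (- y i 0) 0.
have z_ge0 i : 0 <= z i 0 by rewrite mxE le_max lexx orbT.
have z_le_Cz i : z i 0 <= (C *m z) i 0.
  have Cij_ge0 j : 0 <= C i j by move: (C_ge0 i j); rewrite mxE.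
  rewrite [z i 0]mxE ge_max [X in _ <= X]mxE; apply/andP; split; last first.
    by rewrite mxE sumr_ge0 // => j _; rewrite mulr_ge0.
  have -> : - y i 0 = \sum_j C i j * - y j 0 - d i 0.
    by rewrite {1}y_fix !mxE opprD -sumrN; under eq_bigr do rewrite -mulrN.
  apply: le_trans (_ : _ <= \sum_j C i j * - y j 0) _.
    by rewrite gerBl; move: (d_ge0 i 0); rewrite mxE.
  by apply: ler_sum => j _; rewrite ler_wpM2l // mxE le_max lexx.
have z0 : z = 0.
  apply: (opnorm_lt1_vnorm_eq0 p_ge1 C_lt1); apply: vnorm_le p_ge1 _ => i.
  by rewrite !ger0_norm ?z_le_Cz // (le_trans (z_ge0 i)).
move=> i j; rewrite ord1 mxE -oppr_le0.
have : z i 0 = 0 by rewrite z0 mxE.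
by rewrite mxE => <-; rewrite le_max lexx.
Qed.

Lemma fixpoint_gt0 n (C : 'M[R]_n) (d y : 'cV[R]_n) (lo hi : R) :
  let q := opnorm +oo%E C in
  q < 1 -> q * hi < (1 - q) * lo ->
  (forall i, lo <= d i 0 /\ `|d i 0| <= hi) -> y = C *m y + d ->
  forall i, 0 < y i 0.
Proof.
move=> q q_lt1 gap d_bd y_fix i.
have pinf : (1 <= +oo :> \bar R)%E by rewrite leey.
have q_ge0 : 0 <= q := opnorm_ge0 C pinf.
set Y := vnorm +oo%E y; have Y_ge0 : 0 <= Y := vnorm_ge0 y pinf.
have Cy_le j : `|(C *m y) j 0| <= q * Y.
  exact: le_trans (normr_le_vnorm _ j pinf) (vnorm_mulmx_le C y pinf).
have y_entry j : y j 0 = (C *m y) j 0 + d j 0 by rewrite {1}y_fix !mxE.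
have [lo_le hi_ge] := d_bd i.
have Y_le : Y <= q * Y + hi.
  apply: bigmax_le => [|j _]; first by rewrite addr_ge0 ?mulr_ge0 // (le_trans _ hi_ge).
  by rewrite y_entry (le_trans (ler_normD _ _)) // lerD ?Cy_le ?(d_bd j).2.
(* (1 - q) q Y <= q hi < (1 - q) lo gives q Y < lo, while y_i >= lo - q Y. *)
have qY_le : q * ((1 - q) * Y) <= q * hi by rewrite ler_wpM2l //; lra.
have := Cy_le i; rewrite ler_norml => /andP[Cy_ge _].
rewrite y_entry; nra.
Qed.

End FixpointSign.

Section SignDiagonal.
Variables (R : realType) (n : nat) (s : 'cV[R]_n).
Hypothesis s_sign : forall i, s i 0 = 1 \/ s i 0 = -1.

Lemma diagc_mulmxE (y : 'cV[R]_n) i : (diagc s *m y) i 0 = s i 0 * y i 0.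
Proof. by rewrite /diagc mul_diag_mx !mxE. Qed.

Lemma absmx_diagc (y : 'cV[R]_n) : mx_le 0 y -> absmx (diagc s *m y) = y.
Proof.
move=> y_ge0; apply/matrixP => i j; rewrite ord1 mxE diagc_mulmxE normrM.
have := y_ge0 i 0; rewrite mxE => /ger0_norm ->.
by case: (s_sign i) => ->; rewrite ?normrN normr1 mul1r.
Qed.

Lemma diagc_sign_pattern (y : 'cV[R]_n) :
  (forall i, 0 < y i 0) -> has_sign_pattern (diagc s *m y) s.
Proof.
move=> y_gt0 i; rewrite diagc_mulmxE sgrM (gtr0_sg (y_gt0 i)) mulr1.
by case: (s_sign i) => ->; rewrite ?sgrN sgr1.
Qed.

Lemma diagc_mulmx_inj : injective (@mulmx R n n 1 (diagc s)).
Proof.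
move=> y z /matrixP yz; apply/matrixP => i j; rewrite ord1.
have := yz i 0; rewrite !diagc_mulmxE; apply: mulfI.
by case: (s_sign i) => ->; rewrite ?oppr_eq0 oner_eq0.
Qed.

Lemma perturbed_solution_inj (C : 'M[R]_n) (c : 'cV[R]_n) :
  1%:M - C \in unitmx -> injective (fun w => diagc s *m (invmx (1%:M - C) *m (w - c))).
Proof.
move=> C_unit w1 w2 /diagc_mulmx_inj/(congr1 (mulmx (1%:M - C))).
by rewrite !mulmxA mulmxV // !mul1mx; apply: addIr.
Qed.

End SignDiagonal.

Lemma infinite_set_inj (T : Type) (S : set T) (f : nat -> T) :
  (forall k, S (f k)) -> injective f -> infinite_set S.
Proof.
move=> fS f_inj S_fin; apply: infinite_nat.
have -> : [set: nat] = f @^-1` S by apply/seteqP; split=> // k _; exact: fS.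
exact: finite_preimage (fun k l _ _ => f_inj k l) S_fin.
Qed.

Lemma half_ratio_gap (R : realType) (q lo hi : R) :
  0 < hi -> lo <= hi -> 0 <= q -> q < lo / hi / 2 ->
  q < 1 /\ 0 < (1 - q) * lo - q * hi.
Proof. by move=> hi_gt0 lo_le q_ge0; rewrite !ltr_pdivlMr //; split; nra. Qed.

Section AbsoluteValueEquation.
Variables (R : realType) (m n : nat) (A B MB NB : 'M[R]_(m, n)).
Variables (b : 'cV[R]_m) (s : 'cV[R]_n) (MBdag : 'M[R]_(n, m)).
Hypotheses (s_sign : forall i, s i 0 = 1 \/ s i 0 = -1) (B_split : B = MB - NB).
Hypothesis MB_rinv : MB *m MBdag = 1%:M.

Lemma fixpoint_solves_linear (d y : 'cV[R]_n) : MB *m d = - b ->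
  y = MBdag *m (NB + A *m diagc s) *m y + d -> (A *m diagc s - B) *m y = b.
Proof.
move=> MBd y_fix.
have MBy : MB *m y = (NB + A *m diagc s) *m y - b.
  by rewrite {1}y_fix mulmxDr MBd !mulmxA MB_rinv mul1mx.
rewrite B_split !mulmxBl MBy mulmxDl.
by rewrite [_ + A *m _ *m y]addrC addrAC addrK opprB addrC subrK.
Qed.

Lemma ave_of_fixpoint (d y : 'cV[R]_n) : MB *m d = - b ->
  y = MBdag *m (NB + A *m diagc s) *m y + d -> mx_le 0 y ->
  A *m (diagc s *m y) - B *m absmx (diagc s *m y) = b.
Proof.
move=> MBd y_fix y_ge0.
by rewrite absmx_diagc // mulmxA -mulmxBl (fixpoint_solves_linear MBd y_fix).
Qed.

Lemma ave_nonneg_solution (p : \bar R) : (1 <= p)%E ->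
  mx_le (MBdag *m b) 0 -> mx_le 0 (MBdag *m (NB + A *m diagc s)) ->
  opnorm p (MBdag *m (NB + A *m diagc s)) < 1 ->
  exists y : 'cV[R]_n,
    [/\ mx_le 0 y, (A *m diagc s - B) *m y = b &
        A *m (diagc s *m y) - B *m absmx (diagc s *m y) = b].
Proof.
set C := MBdag *m _ => p_ge1 c_le0 C_ge0 C_lt1.
have MBd : MB *m - (MBdag *m b) = - b by rewrite mulmxN mulmxA MB_rinv mul1mx.
have := invmx_1B_fixpoint (- (MBdag *m b)) (opnorm_lt1_unitmx_1B p_ge1 C_lt1).
set y := invmx _ *m _ => y_fix.
have y_ge0 : mx_le 0 y.
  apply: fixpoint_ge0 p_ge1 C_lt1 C_ge0 _ y_fix => i j.
  by move: (c_le0 i j); rewrite !mxE oppr_ge0.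
exists y; split => //; first exact: fixpoint_solves_linear MBd y_fix.
exact: ave_of_fixpoint MBd y_fix y_ge0.
Qed.

Lemma ave_perturbed_solution (w : 'cV[R]_n) (eps : R) :
  let c := MBdag *m b in let C := MBdag *m (NB + A *m diagc s) in
  let q := opnorm +oo%E C in
  mx_lt c 0 -> q < 1 -> q * (vabsmax c + eps) < (1 - q) * (vabsmin c - eps) ->
  MB *m w = 0 -> (forall i, `|w i 0| <= eps) ->
  let x := diagc s *m (invmx (1%:M - C) *m (w - c)) in
  A *m x - B *m absmx x = b /\ has_sign_pattern x s.
Proof.
move=> c C q c_lt0 q_lt1 gap MBw w_le x.
have pinf : (1 <= +oo :> \bar R)%E by rewrite leey.
have MBd : MB *m (w - c) = - b by rewrite mulmxBr MBw mulmxA MB_rinv mul1mx sub0r.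
have := invmx_1B_fixpoint (w - c) (opnorm_lt1_unitmx_1B pinf q_lt1).
set y := invmx _ *m _ => y_fix.
have y_gt0 : forall i, 0 < y i 0.
  apply: fixpoint_gt0 q_lt1 gap _ y_fix => i.
  have -> : (w - c) i 0 = w i 0 - c i 0 by rewrite !mxE.
  have ci_lt0 : c i 0 < 0 by move: (c_lt0 i 0); rewrite [X in _ < X]mxE.
  have := vabsmin_le c i; have := vabsmax_ge c i; rewrite ltr0_norm // => ci_ge ci_le.
  have := w_le i; rewrite ler_norml => /andP[wi_ge wi_le].
  split; first lra.
  by rewrite (le_trans (ler_normB _ _)) // (ltr0_norm ci_lt0) addrC lerD.
split; last exact: diagc_sign_pattern.
by apply: ave_of_fixpoint MBd y_fix _ => i j; rewrite ord1 mxE; exact: ltW (y_gt0 i).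
Qed.

Lemma ave_infinitely_many_solutions : (m < n)%N ->
  mx_lt (MBdag *m b) 0 ->
  opnorm +oo%E (MBdag *m (NB + A *m diagc s))
    < (vabsmin (MBdag *m b) / vabsmax (MBdag *m b)) / 2 ->
  infinite_set [set x : 'cV[R]_n |
    A *m x - B *m absmx x = b /\ has_sign_pattern x s].
Proof.
set c := MBdag *m b; set C := MBdag *m _; set q := opnorm _ C => m_lt_n c_lt0 q_lt.
have pinf : (1 <= +oo :> \bar R)%E by rewrite leey.
pose i0 := Ordinal (leq_ltn_trans (leq0n m) m_lt_n).
have Mx_gt0 : 0 < vabsmax c.
  apply: lt_le_trans (vabsmax_ge c i0); rewrite normr_gt0 ltr0_neq0 //.
  by move: (c_lt0 i0 0); rewrite [X in _ < X]mxE.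
have [q_lt1 gap_gt0] := half_ratio_gap Mx_gt0
  (le_trans (vabsmin_le c i0) (vabsmax_ge c i0)) (opnorm_ge0 C pinf) q_lt.
set g := _ - _ in gap_gt0.
have [v v_neq0 MBv] := kernel_nontrivial MB m_lt_n.
set V := vnorm +oo%E v; have V_gt0 : 0 < V := vnorm_gt0 pinf v_neq0.
pose eps k := g / k.+2%:R.
have eps_gt0 k : 0 < eps k by rewrite divr_gt0.
pose w k := (eps k / V) *: v.
apply: (@infinite_set_inj _ _ (fun k => diagc s *m (invmx (1%:M - C) *m (w k - c))))
  => [k|k l].
  have gap : q * (vabsmax c + eps k) < (1 - q) * (vabsmin c - eps k).
    have : eps k < g by rewrite ltr_pdivrMr ?ltr0n // ltr_pMr // ltr1n.
    rewrite /g /q; move: (eps k) => e; lra.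
  have w_le i : `|w k i 0| <= eps k.
    have eV_ge0 : 0 <= eps k / V by rewrite divr_ge0 ?ltW.
    rewrite mxE normrM ger0_norm // -[leRHS](divfK (lt0r_neq0 V_gt0)).
    by rewrite ler_wpM2l // normr_le_vnorm.
  have MBw : MB *m w k = 0 by rewrite -scalemxAr MBv scaler0.
  exact: (ave_perturbed_solution c_lt0 q_lt1 gap MBw w_le).
move=> /(perturbed_solution_inj s_sign (opnorm_lt1_unitmx_1B pinf q_lt1))/eqP.
rewrite -subr_eq0 -scalerBl scalemx_eq0 (negbTE v_neq0) orbF subr_eq0 => /eqP.
move=> /(divIf (lt0r_neq0 V_gt0))/(mulfI (lt0r_neq0 gap_gt0))/invr_inj/eqP.
by rewrite eqr_nat => /eqP [].
Qed.

End AbsoluteValueEquation.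

Theorem theorem3p5 (R : realType) (m n : nat)
    (A B MB NB : 'M[R]_(m, n)) (b : 'cV[R]_m) (s : 'cV[R]_n)
    (MBdag : 'M[R]_(n, m)) :
  (m < n)%N ->
  (forall i, s i 0 = 1 \/ s i 0 = -1) ->
  B = MB - NB ->
  \rank MB = m ->
  is_MP_inverse MB MBdag ->
  (forall p : \bar R, (1 <= p)%E ->
     mx_le (MBdag *m b) 0 ->
     mx_le 0 (MBdag *m (NB + A *m diagc s)) ->
     opnorm p (MBdag *m (NB + A *m diagc s)) < 1 ->
     exists y : 'cV[R]_n,
       [/\ mx_le 0 y, (A *m diagc s - B) *m y = b &
           A *m (diagc s *m y) - B *m absmx (diagc s *m y) = b])
  /\
  (mx_lt (MBdag *m b) 0 ->
   opnorm +oo%E (MBdag *m (NB + A *m diagc s))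
     < (vabsmin (MBdag *m b) / vabsmax (MBdag *m b)) / 2 ->
   infinite_set [set x : 'cV[R]_n |
      A *m x - B *m absmx x = b /\ has_sign_pattern x s]).
Proof.
move=> m_lt_n s_sign B_split rankMB MBdag_MP.
have MB_rinv := MP_inverse_rinv rankMB MBdag_MP.
split; first exact: ave_nonneg_solution s_sign B_split MB_rinv.
exact: ave_infinitely_many_solutions s_sign B_split MB_rinv m_lt_n.
Qed.
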